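(* Let $P>0$, $v\ge2$, $\omega\in(0,1)$, and let $\Gamma'_{T_1},\Gamma'_{T_2},\Gamma'_R,\Gamma''_{T_1},\Gamma''_{T_2}\ge0$. Set $B_i=\Gamma''_{T_i}+2\Gamma'_{T_i}+1$ and $C_i=(\Gamma'_R+1)(\Gamma'_{T_i}+1)$ for $i=1,2$. For $D\in(0,1)$ let $\bar\gamma_1=P(1-D)^{-v}$, $\bar\gamma_2=PD^{-v}$ and $$\mathcal L(\omega,D)=\frac{B_2-B_1}{\bar\gamma_2}+\frac{B_1+C_1}{\omega\bar\gamma_2}+\frac{B_1-B_2}{\bar\gamma_1}+\frac{B_2+C_2}{(1-\omega)\bar\gamma_1}.$$ Then $D\mapsto\mathcal L(\omega,D)$ is strictly convex on $(0,1)$ and its unique minimizer on $(0,1)$ is $$D^{\rm opt}=\frac{1}{\left(\dfrac{\omega(1-\omega)(B_2-B_1)+(1-\omega)(B_1+C_1)}{\omega(1-\omega)(B_1-B_2)+\omega(B_2+C_2)}\right)^{\frac{1}{v-1}}+1}.$$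
   Context: Terminals $T_1,T_2$ at normalized distance $1$ with the relay on the segment between them at distance $1-D$ from $T_1$ and $D$ from $T_2$; $v$ is the path-loss exponent, so the terminal–relay average SNRs are $\bar\gamma_1=P(1-D)^{-v}$, $\bar\gamma_2=PD^{-v}$. $\mathcal L$ is (up to a positive factor) the high-SNR asymptotic protocol outage probability, $\omega$ the relay power-allocation coefficient, and $\Gamma'_N,\Gamma''_N$ the first and second moments of the interference power at node $N$. *)

From Stdlib Require Import Reals.
Open Scope R_scope.

Definition Bcoef (G2 G1 : R) : R := G2 + 2 * G1 + 1.
Definition Ccoef (GR G1 : R) : R := (GR + 1) * (G1 + 1).

Definition gbar1 (P v D : R) : R := P * Rpower (1 - D) (- v).
Definition gbar2 (P v D : R) : R := P * Rpower D (- v).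

Definition Lfun (P v B1 B2 C1 C2 w D : R) : R :=
  (B2 - B1) / gbar2 P v D + (B1 + C1) / (w * gbar2 P v D)
  + (B1 - B2) / gbar1 P v D + (B2 + C2) / ((1 - w) * gbar1 P v D).

Definition Dopt (v B1 B2 C1 C2 w : R) : R :=
  1 / (Rpower ((w * (1 - w) * (B2 - B1) + (1 - w) * (B1 + C1))
               / (w * (1 - w) * (B1 - B2) + w * (B2 + C2))) (1 / (v - 1)) + 1).

(* With [a := (B2 - B1) + (B1 + C1)/w] and [b := (B1 - B2) + (B2 + C2)/(1 - w)],
   both positive, [L D = (a D^v + b (1 - D)^v) / P].  Since [x ↦ x^v] is strictly
   convex for [v > 1] (all that is needed of [v >= 2]), so is [L]; its critical point solves
   [a D^(v-1) = b (1 - D)^(v-1)], i.e. [(1 - D)/D = (a/b)^(1/(v-1))], which is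
   [Dopt].  The tangent-line inequality at that point shows it is the strict
   global minimizer. *)

From Stdlib Require Import Reals Lra.
Open Scope R_scope.

Lemma Rpower_pos x y : 0 < Rpower x y.
Proof. unfold Rpower; apply exp_pos. Qed.

Section PowerConvexity.

Variable v : R.
Hypothesis v_gt1 : 1 < v.

Lemma Rpower_secant_bounds x y : 0 < x < y ->
  v * Rpower x (v - 1) * (y - x) < Rpower y v - Rpower x v <
  v * Rpower y (v - 1) * (y - x).
Proof.
  intros hxy.
  destruct (MVT_cor2 (fun t => Rpower t v) (fun t => v * Rpower t (v - 1)) x y)
    as [c [hmvt hc]]; [lra | intros c hc; apply derivable_pt_lim_power; lra |].
  simpl in hmvt; rewrite hmvt.
  assert (hxc : Rpower x (v - 1) < Rpower c (v - 1)) by (apply Rlt_Rpower_l; lra).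
  assert (hcy : Rpower c (v - 1) < Rpower y (v - 1)) by (apply Rlt_Rpower_l; lra).
  split; apply Rmult_lt_compat_r; try lra; apply Rmult_lt_compat_l; lra.
Qed.

Lemma Rpower_tangent_lt x y : 0 < x -> 0 < y -> x <> y ->
  Rpower x v + v * Rpower x (v - 1) * (y - x) < Rpower y v.
Proof.
  intros hx hy hxy.
  destruct (Rlt_or_le x y) as [hlt | hle].
  - destruct (Rpower_secant_bounds x y) as [hlow _]; lra.
  - destruct (Rpower_secant_bounds y x) as [_ hup]; lra.
Qed.

Lemma Rpower_strict_convex x y t : 0 < x -> 0 < y -> x <> y -> 0 < t < 1 ->
  Rpower (t * x + (1 - t) * y) v < t * Rpower x v + (1 - t) * Rpower y v.
Proof.
  intros hx hy hxy ht.
  set (z := t * x + (1 - t) * y).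
  assert (hz : 0 < z) by (unfold z; nra).
  assert (hxz : z <> x) by (unfold z; intro e; apply hxy; nra).
  assert (hyz : z <> y) by (unfold z; intro e; apply hxy; nra).
  pose proof (Rpower_tangent_lt z x hz hx hxz) as tx.
  pose proof (Rpower_tangent_lt z y hz hy hyz) as ty.
  set (d := v * Rpower z (v - 1)) in *.
  assert (t * (Rpower z v + d * (x - z)) < t * Rpower x v)
    by (apply Rmult_lt_compat_l; lra).
  assert ((1 - t) * (Rpower z v + d * (y - z)) < (1 - t) * Rpower y v)
    by (apply Rmult_lt_compat_l; lra).
  assert (t * (d * (x - z)) + (1 - t) * (d * (y - z)) = 0) by (unfold z; ring).
  lra.
Qed.

Variables a b : R.
Hypotheses (a_pos : 0 < a) (b_pos : 0 < b).

Definition two_sided_power (D : R) : R := a * Rpower D v + b * Rpower (1 - D) v.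

Lemma two_sided_power_strict_convex x y t :
  0 < x < 1 -> 0 < y < 1 -> x <> y -> 0 < t < 1 ->
  two_sided_power (t * x + (1 - t) * y) <
  t * two_sided_power x + (1 - t) * two_sided_power y.
Proof.
  intros hx hy hxy ht; unfold two_sided_power.
  replace (1 - (t * x + (1 - t) * y)) with (t * (1 - x) + (1 - t) * (1 - y)) by ring.
  pose proof (Rpower_strict_convex x y t ltac:(lra) ltac:(lra) hxy ht).
  pose proof (Rpower_strict_convex (1 - x) (1 - y) t ltac:(lra) ltac:(lra)
                ltac:(lra) ht).
  assert (a * Rpower (t * x + (1 - t) * y) v <
          a * (t * Rpower x v + (1 - t) * Rpower y v))
    by (apply Rmult_lt_compat_l; lra).
  assert (b * Rpower (t * (1 - x) + (1 - t) * (1 - y)) v <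
          b * (t * Rpower (1 - x) v + (1 - t) * Rpower (1 - y) v))
    by (apply Rmult_lt_compat_l; lra).
  lra.
Qed.

Lemma two_sided_power_stationary_min D0 D :
  0 < D0 < 1 -> a * Rpower D0 (v - 1) = b * Rpower (1 - D0) (v - 1) ->
  0 < D < 1 -> D <> D0 -> two_sided_power D0 < two_sided_power D.
Proof.
  intros hD0 hstat hD hne; unfold two_sided_power.
  pose proof (Rpower_tangent_lt D0 D ltac:(lra) ltac:(lra) ltac:(auto)) as t1.
  pose proof (Rpower_tangent_lt (1 - D0) (1 - D) ltac:(lra) ltac:(lra)
                ltac:(lra)) as t2.
  assert (a * (Rpower D0 v + v * Rpower D0 (v - 1) * (D - D0)) < a * Rpower D v)
    by (apply Rmult_lt_compat_l; lra).
  assert (b * (Rpower (1 - D0) v + v * Rpower (1 - D0) (v - 1) * (1 - D - (1 - D0)))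
          < b * Rpower (1 - D) v)
    by (apply Rmult_lt_compat_l; lra).
  assert (a * (v * Rpower D0 (v - 1) * (D - D0))
          + b * (v * Rpower (1 - D0) (v - 1) * (1 - D - (1 - D0))) = 0).
  { replace (a * (v * Rpower D0 (v - 1) * (D - D0)))
      with (v * (D - D0) * (a * Rpower D0 (v - 1))) by ring.
    rewrite hstat; ring. }
  lra.
Qed.

Definition two_sided_power_argmin : R := 1 / (Rpower (a / b) (1 / (v - 1)) + 1).

Lemma two_sided_power_argmin_in01 : 0 < two_sided_power_argmin < 1.
Proof.
  unfold two_sided_power_argmin.
  pose proof (Rpower_pos (a / b) (1 / (v - 1))) as hr.
  split; [apply Rdiv_lt_0_compat; lra |].
  apply (Rmult_lt_reg_r (Rpower (a / b) (1 / (v - 1)) + 1)); [lra |].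
  field_simplify; lra.
Qed.

Lemma two_sided_power_argmin_stationary :
  a * Rpower two_sided_power_argmin (v - 1) =
  b * Rpower (1 - two_sided_power_argmin) (v - 1).
Proof.
  pose proof two_sided_power_argmin_in01 as hD0.
  unfold two_sided_power_argmin in *.
  set (r := Rpower (a / b) (1 / (v - 1))) in *.
  set (D0 := 1 / (r + 1)) in *.
  assert (hr : 0 < r) by apply Rpower_pos.
  assert (hcompl : 1 - D0 = r * D0) by (unfold D0; field; lra).
  assert (hrv : Rpower r (v - 1) = a / b).
  { unfold r; rewrite Rpower_mult.
    replace (1 / (v - 1) * (v - 1)) with 1 by (field; lra).
    apply Rpower_1, Rdiv_lt_0_compat; lra. }
  rewrite hcompl, <- Rpower_mult_distr, hrv by lra.
  field; lra.
Qed.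

End PowerConvexity.

Lemma Lfun_two_sided_power P v B1 B2 C1 C2 w D :
  0 < P -> 0 < w < 1 -> 0 < D < 1 ->
  Lfun P v B1 B2 C1 C2 w D =
  two_sided_power v ((B2 - B1) + (B1 + C1) / w)
                    ((B1 - B2) + (B2 + C2) / (1 - w)) D / P.
Proof.
  intros hP hw hD; unfold Lfun, gbar1, gbar2, two_sided_power.
  rewrite !Rpower_Ropp.
  pose proof (Rpower_pos D v); pose proof (Rpower_pos (1 - D) v).
  field; repeat split; lra.
Qed.

Lemma Dopt_two_sided_power_argmin v B1 B2 C1 C2 w :
  0 < w < 1 -> (B1 - B2) + (B2 + C2) / (1 - w) <> 0 ->
  Dopt v B1 B2 C1 C2 w =
  two_sided_power_argmin v ((B2 - B1) + (B1 + C1) / w)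
                           ((B1 - B2) + (B2 + C2) / (1 - w)).
Proof.
  intros hw hb; unfold Dopt, two_sided_power_argmin; do 3 f_equal.
  replace (w * (1 - w) * (B2 - B1) + (1 - w) * (B1 + C1))
    with (w * (1 - w) * ((B2 - B1) + (B1 + C1) / w)) by (field; lra).
  replace (w * (1 - w) * (B1 - B2) + w * (B2 + C2))
    with (w * (1 - w) * ((B1 - B2) + (B2 + C2) / (1 - w))) by (field; lra).
  field; repeat split; try lra.
  intro e; apply hb.
  apply (Rmult_eq_reg_r (1 - w)); [| lra].
  rewrite Rmult_0_l, <- e; field; lra.
Qed.

Lemma affine_shift_div_pos w B B' C :
  0 < w < 1 -> 0 < B + C -> 0 < B' + C -> 0 < (B' - B) + (B + C) / w.
Proof.
  intros hw hBC hB'C.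
  assert (B + C < (B + C) / w).
  { apply (Rmult_lt_reg_r w); [lra |]; field_simplify; nra. }
  lra.
Qed.

Theorem mainTheorem5 (P v w GT1' GT2' GR' GT1'' GT2'' : R) :
  0 < P -> 2 <= v -> 0 < w < 1 ->
  0 <= GT1' -> 0 <= GT2' -> 0 <= GR' -> 0 <= GT1'' -> 0 <= GT2'' ->
  let B1 := Bcoef GT1'' GT1' in
  let B2 := Bcoef GT2'' GT2' in
  let C1 := Ccoef GR' GT1' in
  let C2 := Ccoef GR' GT2' in
  let L := Lfun P v B1 B2 C1 C2 w in
  (forall x y t : R, 0 < x < 1 -> 0 < y < 1 -> x <> y -> 0 < t < 1 ->
     L (t * x + (1 - t) * y) < t * L x + (1 - t) * L y) /\
  (0 < Dopt v B1 B2 C1 C2 w < 1 /\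
   forall D : R, 0 < D < 1 -> D <> Dopt v B1 B2 C1 C2 w ->
     L (Dopt v B1 B2 C1 C2 w) < L D).
Proof.
  intros hP hv hw hT1' hT2' hR' hT1'' hT2'' B1 B2 C1 C2 L.
  assert (hv1 : 1 < v) by lra.
  assert (hB1 : 1 <= B1) by (unfold B1, Bcoef; lra).
  assert (hB2 : 1 <= B2) by (unfold B2, Bcoef; lra).
  assert (hC1 : 0 <= C1) by (unfold C1, Ccoef; nra).
  assert (hC2 : 0 <= C2) by (unfold C2, Ccoef; nra).
  set (a := (B2 - B1) + (B1 + C1) / w).
  set (b := (B1 - B2) + (B2 + C2) / (1 - w)).
  assert (ha : 0 < a) by (apply affine_shift_div_pos; lra).
  assert (hb : 0 < b) by (apply affine_shift_div_pos; lra).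
  assert (hL : forall D, 0 < D < 1 -> L D = two_sided_power v a b D / P)
    by (intros D hD; apply Lfun_two_sided_power; assumption).
  rewrite (Dopt_two_sided_power_argmin v B1 B2 C1 C2 w hw (Rgt_not_eq b 0 hb)); fold a b.
  pose proof (two_sided_power_argmin_in01 v a b) as hD0.
  split; [| split; [exact hD0 |]].
  - intros x y t hx hy hxy ht.
    rewrite !hL by nra.
    pose proof (two_sided_power_strict_convex v hv1 a b ha hb x y t hx hy hxy ht).
    unfold Rdiv; apply Rmult_lt_reg_r with P; [lra |].
    field_simplify; lra.
  - intros D hD hne.
    rewrite !hL by assumption.
    apply Rmult_lt_compat_r; [apply Rinv_0_lt_compat; lra |].
    apply two_sided_power_stationary_min; try assumption.
    apply two_sided_power_argmin_stationary; assumption.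
Qed.
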